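(* Let $n\ge2$, let $X\subseteq\mathbb{N}$ be finite and let $P:[X]^2\to n$ be a colouring. Then: (1) for every $m\in\mathbb{N}$, $|\{x\in X:|\sigma_x|\le m\}|\le n^m$; (2) for every $x\in X\setminus\{\min X\}$ and every $c\in\mathrm{col}(\sigma_x)$, $\min\mathrm{ho}(\sigma_x,c)\le\sigma_x^-(|\sigma_x^-|-1)$ (the last entry of $\sigma_x^-$).
   Context: Pairs in $[X]^2$ are $(x,y)$ with $x<y$. For $x\in X$, the hereditarily minimal prehomogeneous sequence $\sigma_x$ (a finite increasing sequence of elements of $X$) is defined by $\sigma_x(0)=\min X$ and $\sigma_x(i+1)=\min\{y\in X: y>\sigma_x(i)\text{ and }P(\sigma_x(j),x)=P(\sigma_x(j),y)\text{ for all }j\le i\}$, the construction stopping at the first $i$ with $\sigma_x(i)=x$ (so $x$ is the last entry of $\sigma_x$). For $c<n$, $\mathrm{ho}(\sigma_x,c)=\{\sigma_x(i): i<|\sigma_x|-1,\ P(\sigma_x(i),x)=c\}$, and $\mathrm{col}(\sigma_x)=\{c<n:\mathrm{ho}(\sigma_x,c)\ne\emptyset\}$. Every proper nonempty initial segment of $\sigma_x$ equals $\sigma_y$ for some $y<x$ in $X$. For $x\in X\setminus\{\min X\}$, $\sigma_x^-$ denotes the longest proper initial segment $\sigma_y\subsetneq\sigma_x$ such that $\mathrm{col}(\sigma_y)\subsetneq\mathrm{col}(\sigma_x)$. *)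

From mathcomp Require Import all_boot all_order.
From mathcomp Require Import finmap.
Set Implicit Arguments. Unset Strict Implicit. Unset Printing Implicit Defensive.
Local Open Scope fset_scope.

Definition seqmin (s : seq nat) : nat := foldr minn (head 0 s) s.

Section HMPS.
Variables (n : nat) (X : {fset nat}) (P : nat -> nat -> 'I_n).
(* P is the colouring; only its values P a b with a < b, a b \in X matter. *)

Definition minX : nat := seqmin X.

Fixpoint sigma_aux (x : nat) (fuel : nat) (s : seq nat) : seq nat :=
  match fuel with
  | 0 => s
  | f.+1 =>
    if last 0 s == x then s else
    let cands := [seq y <- enum_fset X |
                   (last 0 s < y) && all (fun j => P j x == P j y) s] in
    if cands is [::] then s else sigma_aux x f (rcons s (seqmin cands))
  end.

(* hereditarily minimal prehomogeneous sequence sigma_x (for x \in X);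
   fuel #|X| suffices since entries are distinct elements of X *)
Definition sigma (x : nat) : seq nat := sigma_aux x #|` X| [:: minX].

(* for a nonempty sequence s (thought of as sigma_y, y = last entry):
   ho(s,c) = entries s(i), i < |s|-1, with P(s(i), y) = c *)
Definition ho (s : seq nat) (c : 'I_n) : seq nat :=
  [seq a <- belast (head 0 s) (behead s) | P a (last 0 s) == c].

Definition col (s : seq nat) : {set 'I_n} := [set c | ho s c != [::]].

Definition sigma_minus (x : nat) : seq nat :=
  let s := sigma x in
  let ks := [seq k <- iota 1 (size s).-1 | col (take k s) \proper col s] in
  take (last 1 ks) s.

End HMPS.

From mathcomp Require Import all_boot all_order.
From mathcomp Require Import finmap.
Set Implicit Arguments. Unset Strict Implicit. Unset Printing Implicit Defensive.
Local Open Scope fset_scope.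

(* Each entry of sigma_x after the first is the least y in X above the previous
   entry that agrees with x in colour towards all earlier entries, so sigma_x, and
   with it x = last sigma_x, is determined by the word of colours
   P(sigma_x(i), x), i < |sigma_x| - 1.  Padding this word with a marker and then
   zeroes injects {x | |sigma_x| <= m} into the n^m words of length m.
   By prehomogeneity an entry has the same colour towards every later entry as
   towards x, so col of the initial segment of length k is the set of the first
   k - 1 colours of x.  Cutting sigma_x just after the first entry of colour c thus
   gives a proper initial segment whose col misses c, and sigma_x^- is at least
   that long. *)

Lemma seqmin_le s a : a \in s -> seqmin s <= a.
Proof.
rewrite /seqmin; move: (head 0 s) => d.
elim: s => [|b t IH] //=; rewrite inE => /predU1P [-> | /IH le_a].
  exact: geq_minl.
exact: leq_trans (geq_minr _ _) le_a.
Qed.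

Lemma seqmin_mem s : s != [::] -> seqmin s \in s.
Proof.
case: s => [|a t] // _; rewrite /seqmin /=.
have foldr_mem d u : foldr minn d u \in d :: u.
  elim: u => [|b u IH] /=; first exact: mem_head.
  rewrite /minn; case: ifP => _; first by rewrite !inE eqxx orbT.
  by move: IH; rewrite !inE => /orP [-> | ->]; rewrite ?orbT.
by rewrite /minn; case: ifP => _; rewrite ?mem_head ?foldr_mem.
Qed.

Lemma sorted_leq_last (s : seq nat) x0 a : sorted leq s -> a \in s -> a <= last x0 s.
Proof.
move=> s_sorted a_s; have s_gt0 : 0 < size s by case: s a_s {s_sorted}.
rewrite -(nth_index x0 a_s) -nth_last.
apply: (sorted_leq_nth leq_trans leqnn x0 s_sorted); rewrite ?inE ?index_mem ?ltn_predL //.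
by rewrite -ltnS prednK // index_mem.
Qed.

Lemma last_take (T : Type) (x0 : T) s k : 0 < k <= size s -> last x0 (take k s) = nth x0 s k.-1.
Proof.
by case/andP=> k_gt0 le_ks; rewrite -nth_last size_takel // nth_take // ltn_predL.
Qed.

Lemma nth_rcons_inj (T : eqType) (a b : T) (w w' : seq T) : a != b ->
  nth a (rcons w b) =1 nth a (rcons w' b) -> w = w'.
Proof.
move=> neq_ab eq_nth.
have size_eq : size w = size w'.
  wlog lt_ww' : w w' eq_nth / size w < size w'.
    move=> gen; case: (ltngtP (size w) (size w')) => // lt; first exact: gen.
    by apply/esym/gen.
  move: (eq_nth (size w')); rewrite !nth_rcons ltnn eqxx ltnNge (ltnW lt_ww') /=.
  by rewrite gtn_eqF // => eq_ab; rewrite eq_ab eqxx in neq_ab.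
apply/(@rcons_injl _ b)/(eq_from_nth (x0 := a)); first by rewrite !size_rcons size_eq.
by move=> i _; apply: eq_nth.
Qed.

Lemma leq_cardf_in (K : choiceType) (T : finType) (f : K -> T) (A : {fset K}) :
  {in A &, injective f} -> #|` A| <= #|T|.
Proof.
move=> f_inj; have /card_uniqP : uniq (map f A) by rewrite map_inj_in_uniq.
by rewrite size_map => <-; apply: max_card.
Qed.

Section HereditarilyMinimal.
Variables (n : nat) (X : {fset nat}) (P : nat -> nat -> 'I_n).

Definition candidates x s :=
  [seq y <- enum_fset X | (last 0 s < y) && all (fun j => P j x == P j y) s].

Definition hered_min x s := forall k, 0 < k -> k < size s ->
  candidates x (take k s) != [::] /\ nth 0 s k = seqmin (candidates x (take k s)).

Lemma mem_candidates x s y :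
  (y \in candidates x s) = [&& y \in X, last 0 s < y & all (fun j => P j x == P j y) s].
Proof. by rewrite mem_filter andbC. Qed.

Lemma candidates_eq x x' s :
  [seq P j x | j <- s] = [seq P j x' | j <- s] -> candidates x s = candidates x' s.
Proof.
move/eq_in_map=> eq_col; apply: eq_filter => y; congr andb.
by apply: eq_in_all => j j_s; rewrite eq_col.
Qed.

Lemma hered_min_mem x s k : hered_min x s -> 0 < k -> k < size s ->
  nth 0 s k \in candidates x (take k s).
Proof. by move=> hm k_gt0 lt_ks; have [ne ->] := hm k k_gt0 lt_ks; apply: seqmin_mem. Qed.

Lemma hered_min_rcons x s : hered_min x s -> candidates x s != [::] ->
  hered_min x (rcons s (seqmin (candidates x s))).
Proof.
move=> hm ne k k_gt0; rewrite size_rcons ltnS -cats1 leq_eqVlt => /predU1P [-> | lt_ks].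
  by rewrite take_size_cat // nth_cat ltnn subnn.
by rewrite takel_cat ?(ltnW lt_ks) // nth_cat lt_ks; apply: hm.
Qed.

Lemma hered_min_sorted x s : hered_min x s -> sorted ltn s.
Proof.
move=> hm; apply/(sortedP 0) => i lt_is.
have := hered_min_mem hm (ltn0Sn i) lt_is.
by rewrite mem_candidates last_take ?(ltnW lt_is) // => /and3P [].
Qed.

Lemma hered_min_prehom x s i k : hered_min x s -> i < k < size s ->
  P (nth 0 s i) (nth 0 s k) = P (nth 0 s i) x.
Proof.
move=> hm /andP [lt_ik lt_ks].
have := hered_min_mem hm (leq_ltn_trans (leq0n i) lt_ik) lt_ks.
rewrite mem_candidates => /and3P [_ _ /allP prehom].
by apply/esym/eqP/prehom; rewrite -(nth_take 0 lt_ik) mem_nth // size_takel // ltnW.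
Qed.

Lemma hered_min_size x s : head 0 s \in X -> hered_min x s -> size s <= #|` X|.
Proof.
move=> s0X hm; apply: uniq_leq_size.
  exact: (sorted_uniq ltn_trans ltnn (hered_min_sorted hm)).
move=> a /(nthP 0) [k lt_ks <-]; case: (posnP k) => [-> | k_gt0].
  by rewrite nth0.
by have := hered_min_mem hm k_gt0 lt_ks; rewrite mem_candidates => /and3P [].
Qed.

Lemma sigma_aux_step x f s : last 0 s != x -> candidates x s != [::] ->
  sigma_aux X P x f.+1 s = sigma_aux X P x f (rcons s (seqmin (candidates x s))).
Proof. by move=> /negbTE /= ->; rewrite -/(candidates x s); case: candidates. Qed.

Lemma sigma_aux_spec x f s : x \in X -> s != [::] -> head 0 s \in X -> hered_min x s ->
  last 0 s <= x -> #|` X| < f + size s ->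
  exists2 t, sigma_aux X P x f s = s ++ t & hered_min x (s ++ t) /\ last 0 (s ++ t) = x.
Proof.
move=> xX; elim: f s => [|f IH] s s_ne s0X hm le_last lt_X.
  by move: lt_X; rewrite ltnNge (hered_min_size s0X hm).
have [last_x | last_ne] := eqVneq (last 0 s) x.
  by exists [::]; rewrite cats0 //= last_x eqxx.
have x_cand : x \in candidates x s.
  by rewrite mem_candidates xX ltn_neqAle last_ne le_last; apply/allP => j _.
have cand_ne : candidates x s != [::] by case: candidates x_cand.
rewrite sigma_aux_step //; set y := seqmin _.
have [|||||t -> [hm' last_t]] := IH (rcons s y).
- by rewrite -size_eq0 size_rcons.
- by case: (s) s_ne s0X.
- exact: hered_min_rcons.
- by rewrite last_rcons seqmin_le.
- by rewrite size_rcons addnS.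
by exists (y :: t); rewrite -cat_rcons.
Qed.

Lemma minX_mem x : x \in X -> minX X \in X.
Proof. by move=> xX; apply: seqmin_mem; move: (xX : x \in enum_fset X); case: enum_fset. Qed.

Lemma sigma_spec x : x \in X ->
  [/\ hered_min x (sigma X P x), last 0 (sigma X P x) = x,
      head 0 (sigma X P x) = minX X & 0 < size (sigma X P x)].
Proof.
move=> xX; rewrite /sigma; have [|||||t ->] := @sigma_aux_spec x #|` X| [:: minX X] xX => //.
- exact: minX_mem xX.
- by move=> k k_gt0; rewrite ltnNge k_gt0.
- exact: seqmin_le.
- by rewrite addn1.
by case.
Qed.

Definition colours x :=
  [seq P a x | a <- take (size (sigma X P x)).-1 (sigma X P x)].

Lemma size_colours x : size (colours x) = (size (sigma X P x)).-1.
Proof. by rewrite size_map size_takel ?leq_pred. Qed.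

Lemma map_take_sigma x k : k < size (sigma X P x) ->
  [seq P a x | a <- take k (sigma X P x)] = take k (colours x).
Proof. by move=> lt_k; rewrite /colours -map_take take_takel // -ltnS (ltn_predK lt_k). Qed.

Lemma colours_inj : {in X &, injective colours}.
Proof.
move=> x x' xX x'X eq_col.
have [hm last_s head_s s_gt0] := sigma_spec xX.
have [hm' last_s' head_s' s'_gt0] := sigma_spec x'X.
have size_eq : size (sigma X P x) = size (sigma X P x').
  by rewrite -(prednK s_gt0) -(prednK s'_gt0) -!size_colours eq_col.
suff eq_take k : k <= size (sigma X P x) -> take k (sigma X P x) = take k (sigma X P x').
  by rewrite -last_s -last_s' -(take_size (sigma X P x)) eq_take // size_eq take_size.
elim: k => [|k IHk] lt_ks; first by rewrite !take0.
have lt_ks' : k < size (sigma X P x') by rewrite -size_eq.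
have eq_k := IHk (ltnW lt_ks).
rewrite (take_nth 0 lt_ks) (take_nth 0 lt_ks') eq_k; congr rcons.
have [-> | k_gt0] := posnP k; first by rewrite !nth0 head_s head_s'.
have [_ ->] := hm k k_gt0 lt_ks.
have [_ ->] := hm' k k_gt0 lt_ks'.
rewrite eq_k; congr seqmin; apply: candidates_eq.
by rewrite -{1}eq_k map_take_sigma // eq_col -map_take_sigma.
Qed.

Lemma card_sigma_size_leq m : 1 < n ->
  #|` [fset x in X | size (sigma X P x) <= m]| <= n ^ m.
Proof.
move=> n_gt1; pose o0 : 'I_n := Ordinal (ltnW n_gt1); pose o1 : 'I_n := Ordinal n_gt1.
pose code x := [ffun i : 'I_m => nth o0 (rcons (colours x) o1) i].
apply: (@leq_trans #|{ffun 'I_m -> 'I_n}|); last by rewrite card_ffun !card_ord.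
apply: (leq_cardf_in (f := code)).
move=> x x'; rewrite !inE /= => /andP [xX le_xm] /andP [x'X le_x'm] eq_code.
apply: colours_inj => //; apply: (nth_rcons_inj (a := o0) (b := o1)) => // i.
have [lt_im | le_mi] := ltnP i m.
  by move/ffunP/(_ (Ordinal lt_im)): eq_code; rewrite !ffunE.
have size_padded y : y \in X -> size (sigma X P y) <= m -> size (rcons (colours y) o1) <= i.
  move=> yX le_ym; have [_ _ _ s_gt0] := sigma_spec yX.
  by rewrite size_rcons size_colours prednK // (leq_trans le_ym).
by rewrite !nth_default ?size_padded.
Qed.

Lemma hoE s c : ho P s c = [seq a <- take (size s).-1 s | P a (last 0 s) == c].
Proof.
case: s => [|a t] //; rewrite /ho /=; congr filter.
by rewrite lastI -cats1 take_size_cat ?size_belast.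
Qed.

Lemma mem_col s c :
  (c \in col P s) = (c \in [seq P a (last 0 s) | a <- take (size s).-1 s]).
Proof.
rewrite inE hoE -has_filter -has_pred1 has_map.
by apply: eq_has => a; rewrite /= eq_sym.
Qed.

Lemma col_take_sigma x k : x \in X -> 0 < k <= size (sigma X P x) ->
  col P (take k (sigma X P x)) = [set c | c \in take k.-1 (colours x)].
Proof.
move=> xX /andP [k_gt0 le_ks]; have [hm _ _ _] := sigma_spec xX.
apply/setP => c; rewrite mem_col inE size_takel // take_takel ?leq_pred //.
rewrite last_take ?k_gt0 // -map_take_sigma; last by rewrite (leq_trans _ le_ks) ?ltn_predL.
congr (c \in _); apply/eq_in_map => a /(nthP 0) [i lt_i <-].
rewrite size_takel in lt_i; last by rewrite (leq_trans _ le_ks) ?leq_pred.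
by rewrite nth_take // (hered_min_prehom hm) // lt_i (leq_trans _ le_ks) ?ltn_predL.
Qed.

Lemma col_sigma (x : nat) : x \in X -> col P (sigma X P x) = [set c | c \in colours x].
Proof.
move=> xX; have [_ _ _ s_gt0] := sigma_spec xX.
rewrite -{1}(take_size (sigma X P x)) col_take_sigma ?s_gt0 ?leqnn //.
by rewrite take_oversize // size_colours.
Qed.

Lemma sigma_minus_maximal x k : 0 < k -> k < size (sigma X P x) ->
  col P (take k (sigma X P x)) \proper col P (sigma X P x) ->
  exists2 K, k <= K < size (sigma X P x) & sigma_minus X P x = take K (sigma X P x).
Proof.
rewrite /sigma_minus /= => k_gt0 lt_ks proper_k; set ks := filter _ _.
have s_gt0 : 0 < size (sigma X P x) by apply: ltn_trans lt_ks.
have in_ks K : K \in ks -> K < size (sigma X P x).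
  by rewrite mem_filter mem_iota add1n prednK // => /and3P [].
have k_ks : k \in ks by rewrite mem_filter proper_k mem_iota add1n prednK ?k_gt0.
have last_ks : last 1 ks \in ks by case: ks k_ks {in_ks} => //= a l _; apply: mem_last.
exists (last 1 ks) => //; rewrite in_ks // andbT.
by apply: sorted_leq_last k_ks; apply/sorted_filter/iota_sorted; apply: leq_trans.
Qed.

Lemma min_ho_leq_last_sigma_minus (x : nat) c : x \in X -> c \in col P (sigma X P x) ->
  seqmin (ho P (sigma X P x) c) <= nth 0 (sigma_minus X P x) (size (sigma_minus X P x)).-1.
Proof.
move=> xX c_col; have [hm last_s _ _] := sigma_spec xX.
have c_colours : c \in colours x by rewrite col_sigma // inE in c_col.
set j := index c (colours x).
have lt_j : j < (size (sigma X P x)).-1 by rewrite -size_colours index_mem.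
have lt_j1 : j.+1 < size (sigma X P x) by rewrite -ltn_predRL.
have col_j : P (nth 0 (sigma X P x) j) x = c.
  by rewrite -(nth_index c c_colours) (nth_map 0) ?nth_take // size_takel ?leq_pred.
have proper_j : col P (take j.+1 (sigma X P x)) \proper col P (sigma X P x).
  rewrite col_sigma // col_take_sigma ?(ltnW lt_j1) //=; apply/properP; split.
    by apply/subsetP => d; rewrite !inE; apply: mem_take.
  by exists c; rewrite !inE // in_take // ltnn.
have [K /andP [le_jK lt_Ks] ->] := sigma_minus_maximal (ltn0Sn j) lt_j1 proper_j.
have lt_K1 : K.-1 < K by rewrite ltn_predL (leq_trans (ltn0Sn j) le_jK).
rewrite size_takel ?(ltnW lt_Ks) // (nth_take _ lt_K1).
apply: (@leq_trans (nth 0 (sigma X P x) j)).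
  apply: seqmin_le; rewrite hoE last_s mem_filter col_j eqxx /=.
  by rewrite -(nth_take 0 lt_j) mem_nth // size_takel ?leq_pred.
have := hered_min_sorted hm; rewrite ltn_sorted_uniq_leq => /andP [_ s_sorted].
apply: (sorted_leq_nth leq_trans leqnn 0 s_sorted).
- by rewrite inE (ltn_trans _ lt_j1).
- by rewrite inE (ltn_trans lt_K1 lt_Ks).
- by rewrite -ltnS (ltn_predK le_jK).
Qed.

End HereditarilyMinimal.

Theorem lemma2p8 (n : nat) (X : {fset nat}) (P : nat -> nat -> 'I_n) :
  2 <= n ->
  (forall m : nat,
     #|` [fset x in X | size (sigma X P x) <= m] | <= n ^ m)
  /\
  (forall x : nat, x \in X -> x != minX X ->
   forall c : 'I_n, c \in col P (sigma X P x) ->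
     seqmin (ho P (sigma X P x) c)
       <= nth 0 (sigma_minus X P x) (size (sigma_minus X P x)).-1).
Proof.
move=> n_gt1; split=> [m | x xX _ c].
  exact: card_sigma_size_leq.
exact: min_ho_leq_last_sigma_minus.
Qed.
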